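(* Let $\mathcal{W}$ be a finite set (vocabulary of words), let $n \ge 1$, and let $\phi:\mathcal{W}\to\{0,1\}^n$ be a fixed map (a binary embedding, chosen independently of the input). Let $\varepsilon > 0$. Define the randomized mechanism $\mathrm{BRR}:\mathcal{W}\to\mathcal{W}$ as follows: on input $w\in\mathcal{W}$, compute $\phi_w=\phi(w)$; form $\hat\phi_w\in\{0,1\}^n$ by applying, independently to each coordinate $i$, the randomized response mechanism, i.e. $(\hat\phi_w)_i = (\phi_w)_i$ with probability $\frac{e^{\varepsilon}}{1+e^{\varepsilon}}$ and $(\hat\phi_w)_i = 1-(\phi_w)_i$ otherwise; then output $\hat w \in \operatorname{argmin}_{y\in\mathcal{W}} \|\phi(y)-\hat\phi_w\|$, where ties are broken by a fixed rule that depends only on $\hat\phi_w$ (not on $w$). Let $d(w,w')$ denote the Hamming distance between $\phi(w)$ and $\phi(w')$, i.e. the number of coordinates in which they differ. Then $\mathrm{BRR}$ is $\varepsilon d$-differentially private: for all $w,w'\in\mathcal{W}$ and all $y\in\mathcal{W}$, $$\Pr[\mathrm{BRR}(w)=y]\le e^{\varepsilon d(w,w')}\Pr[\mathrm{BRR}(w')=y].$$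
   Context: Metric differential privacy: given a set $\mathcal{W}$ with a distance $d:\mathcal{W}\times\mathcal{W}\to\mathbb{R}_{+}$, a randomized mechanism $\mathcal{M}:\mathcal{W}\to\mathcal{Y}$ is called $\varepsilon d$-differentially private if for all $w,w'\in\mathcal{W}$ and all outputs $y\in\mathcal{Y}$, $\Pr[\mathcal{M}(w)=y]\le e^{\varepsilon d(w,w')}\Pr[\mathcal{M}(w')=y]$. Here $\|\cdot\|$ is the Euclidean norm on $\mathbb{R}^n \supseteq \{0,1\}^n$. *)

From HB Require Import structures.
From mathcomp Require Import all_boot all_order all_algebra.
From mathcomp Require Import reals.
From mathcomp Require Import sequences exp.
Set Implicit Arguments. Unset Strict Implicit. Unset Printing Implicit Defensive.
Import Order.TTheory GRing.Theory Num.Theory.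
Local Open Scope ring_scope.

Notation bvec n := {ffun 'I_n -> bool}.

Definition eucl_dist (R : realType) (n : nat) (u v : bvec n) : R :=
  Num.sqrt (\sum_(i < n) ((u i)%:R - (v i)%:R) ^+ 2).

Definition hamming (n : nat) (u v : bvec n) : nat :=
  #|[set i : 'I_n | u i != v i]|.

Definition rr_prob (R : realType) (eps : R) (n : nat) (x v : bvec n) : R :=
  \prod_(i < n) (if v i == x i then expR eps / (1 + expR eps)
                 else 1 - expR eps / (1 + expR eps)).

(* Pr[BRR(w) = y], where dec is the (deterministic) nearest-neighbour decoder
   depending only on the noisy vector. *)
Definition BRR_prob (R : realType) (eps : R) (W : finType) (n : nat)
  (phi : W -> bvec n) (dec : bvec n -> W) (w y : W) : R :=
  \sum_(v : bvec n | dec v == y) rr_prob eps (phi w) v.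

(* Randomized response on a single bit has likelihood ratio at most [e^eps]
   between the two possible inputs, and ratio 1 when the inputs agree; the
   coordinates are flipped independently, so the likelihoods of a noisy vector
   under [phi w] and [phi w'] differ by at most [e^(eps d(w, w'))].  The decoder
   sees only the noisy vector, so [Pr[BRR(w) = y]] is a sum of such likelihoods
   over a set of noisy vectors independent of [w] and the bound survives the
   summation. *)
From HB Require Import structures.
From mathcomp Require Import all_boot all_order all_algebra.
From mathcomp Require Import reals.
From mathcomp Require Import sequences exp.
From mathcomp Require Import lra.
Import Order.TTheory GRing.Theory Num.Theory.
Local Open Scope ring_scope.

Section RandomizedResponse.
Variables (R : realType) (eps : R).
Hypothesis eps_ge0 : 0 <= eps.

Let e := expR eps.
Let p := e / (1 + e).

Definition rr_bit_prob (a b : bool) : R := if b == a then p else 1 - p.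

Lemma rr_probE n (x v : bvec n) :
  rr_prob eps x v = \prod_(i < n) rr_bit_prob (x i) (v i).
Proof. by []. Qed.

Let e_ge1 : 1 <= e. Proof. by rewrite /e -expR0 ler_expR. Qed.

Let flip_probE : 1 - p = 1 / (1 + e).
Proof.
have e1_neq0 : 1 + e != 0 by apply: lt0r_neq0; have := e_ge1; lra.
by rewrite /p -{1}(divff e1_neq0) -mulrBl addrK.
Qed.

Lemma rr_bit_prob_ge0 a b : 0 <= rr_bit_prob a b.
Proof.
have e1 := e_ge1.
rewrite /rr_bit_prob; case: ifP => _.
  by rewrite /p divr_ge0 //; lra.
by rewrite flip_probE divr_ge0 //; lra.
Qed.

Lemma rr_bit_prob_le a a' b :
  rr_bit_prob a b <= (if a != a' then e else 1) * rr_bit_prob a' b.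
Proof.
have keep_le : p <= e * (1 - p) by rewrite flip_probE mulrA mulr1.
have flip_le : 1 - p <= e * p.
  have e1 := e_ge1.
  rewrite flip_probE /p mulrA ler_pM2r ?invr_gt0; last lra.
  by rewrite -[1]mulr1 ler_pM.
by rewrite /rr_bit_prob; case: a a' b => [] [] [] /=; rewrite ?mul1r ?lexx.
Qed.

Lemma expR_hamming n (x x' : bvec n) :
  expR (eps * (hamming x x')%:R) = \prod_(i < n) (if x i != x' i then e else 1).
Proof.
rewrite expRM_natr -big_mkcond /= prodr_const /hamming.
by congr (_ ^+ _); apply: eq_card => i; rewrite inE.
Qed.

Lemma rr_prob_le n (x x' v : bvec n) :
  rr_prob eps x v <= expR (eps * (hamming x x')%:R) * rr_prob eps x' v.
Proof.
rewrite !rr_probE expR_hamming -big_split /=.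
apply: ler_prod => i _; rewrite rr_bit_prob_ge0.
exact: rr_bit_prob_le.
Qed.

End RandomizedResponse.

Theorem theorem3 (R : realType) (W : finType) (n : nat) (hn : (1 <= n)%N)
  (phi : W -> {ffun 'I_n -> bool}) (eps : R) (heps : 0 < eps)
  (dec : {ffun 'I_n -> bool} -> W)
  (hdec : forall (v : {ffun 'I_n -> bool}) (y : W),
      eucl_dist R (phi (dec v)) v <= eucl_dist R (phi y) v) :
  forall w w' y : W,
    BRR_prob eps phi dec w y
      <= expR (eps * (hamming (phi w) (phi w'))%:R) * BRR_prob eps phi dec w' y.
Proof.
move=> w w' y; rewrite /BRR_prob mulr_sumr; apply: ler_sum => v _.
exact/rr_prob_le/ltW.
Qed.
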